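(* Let $\mathbb{F}$ be a finite field, $n\ge2$, and let $S$ be an isolated subsemigroup of $M(n,\mathbb{F})$. Suppose one of the following holds: (1) $S$ contains the zero matrix; (2) $S$ contains two idempotents $e(V_1,V_2)$ and $e(V'_1,V'_2)$ of rank $n-1$ with $V_2\subseteq V'_1$; (3) $S$ contains an idempotent of rank at most $n-2$. Then $I_{n-1}\subseteq S$.
   Context: $M(n,\mathbb{F})$ is the semigroup of $n\times n$ matrices over $\mathbb{F}$, identified with linear operators on $\mathbb{F}^n$. For a direct sum decomposition $\mathbb{F}^n=V_1\oplus V_2$, $e(V_1,V_2)$ denotes the idempotent projection onto $V_1$ along $V_2$ (every idempotent of $M(n,\mathbb{F})$ is of this form). $I_{n-1}$ is the set of all matrices of rank at most $n-1$. A subsemigroup $T$ of a semigroup $S$ is isolated if for all $x\in S$ and positive integers $m$, $x^m\in T$ implies $x\in T$. *)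

(* Matrices act on row vectors: x |-> x *m A. *)
From HB Require Import structures.
From mathcomp Require Import all_boot all_order all_algebra.
Set Implicit Arguments. Unset Strict Implicit. Unset Printing Implicit Defensive.
Import GRing.Theory.
Local Open Scope ring_scope.

(* m-th power of a square matrix (general n, not nec. of the form n.+1) *)
Definition mxpow (F : fieldType) (n : nat) (A : 'M[F]_n) (m : nat) : 'M[F]_n :=
  iter m (mulmx A) 1%:M.

Definition subsemigroup (F : fieldType) (n : nat) (S : {pred 'M[F]_n}) : Prop :=
  forall A B, A \in S -> B \in S -> A *m B \in S.

Definition isolated (F : fieldType) (n : nat) (S : {pred 'M[F]_n}) : Prop :=
  forall (x : 'M[F]_n) (m : nat), (0 < m)%N -> mxpow x m \in S -> x \in S.

Definition dirsum_full (F : fieldType) (n : nat) (V1 V2 : 'M[F]_n) : Prop :=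
  (V1 :&: V2 == (0 : 'M[F]_n))%MS /\ (V1 + V2 == 1%:M)%MS.

Definition eproj (F : fieldType) (n : nat) (V1 V2 : 'M[F]_n) : 'M[F]_n :=
  proj_mx V1 V2.

Definition idem_mx (F : fieldType) (n : nat) (A : 'M[F]_n) : Prop :=
  A *m A = A.

(* Conjugation by an invertible matrix preserves isolated subsemigroups, an
   idempotent of rank r is conjugate to [pid_mx r], and over a finite field
   some positive power of every matrix is idempotent; so everything reduces to
   the chain of idempotents [pid_mx r].  Along this chain isolation moves both
   ways: [pid_mx (k+1)] is a product of two square roots of [pid_mx k], and
   [pid_mx k] is obtained by compressing a square root of [pid_mx (k+2)] by
   [pid_mx (k+1)].  Hence [0 = pid_mx 0] in S yields every singular matrix, an
   idempotent of rank at most n-2 descends to 0, and in case (2) the product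
   e(V'_1,V'_2) e(V_1,V_2) kills V_2, so it has rank at most n-2 and one of
   its powers is such an idempotent. *)

From mathcomp Require Import all_boot all_order all_algebra zify.
Set Implicit Arguments. Unset Strict Implicit. Unset Printing Implicit Defensive.
Import GRing.Theory.
Local Open Scope ring_scope.

Section PidDelta.
Variables (F : fieldType) (n : nat).

Lemma mul_pid_delta_mx r (i j : 'I_n) :
  (pid_mx r : 'M[F]_n) *m delta_mx i j = if (i < r)%N then delta_mx i j else 0.
Proof.
apply/matrixP => k l; rewrite !mxE (bigD1 i) //= big1 ?addr0.
  rewrite !mxE eqxx /= -natrM mulnb -[(k : nat) == i]/(k == i).
  by have [->|/negPf ki] := eqVneq k i; case: ifP => h; rewrite ?mxE ?eqxx ?ki ?h.
by move=> k' /negPf k'i; rewrite !mxE k'i mulr0.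
Qed.

Lemma mul_delta_pid_mx r (i j : 'I_n) :
  delta_mx i j *m (pid_mx r : 'M[F]_n) = if (j < r)%N then delta_mx i j else 0.
Proof.
apply/matrixP => k l; rewrite !mxE (bigD1 j) //= big1 ?addr0.
  rewrite !mxE eqxx andbT -natrM mulnb -[(j : nat) == l]/(j == l) (eq_sym j l).
  by have [->|/negPf lj] := eqVneq l j; case: ifP => h; rewrite ?mxE ?eqxx ?lj ?h ?andbF.
by move=> k' /negPf k'j; rewrite !mxE k'j andbF mul0r.
Qed.

Lemma pid_mxS (i : 'I_n) : (pid_mx i.+1 : 'M[F]_n) = pid_mx i + delta_mx i i.
Proof.
apply/matrixP => k l; rewrite !mxE ltnS leq_eqVlt.
rewrite -[(k : nat) == i]/(k == i) -[(k : nat) == l]/(k == l).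
have [->|_] := eqVneq k i; last by rewrite addr0.
by rewrite ltnn andbF add0r andbT (eq_sym l i).
Qed.

End PidDelta.

Section MxPow.
Variables (F : fieldType) (n : nat).

Lemma mxpowS (A : 'M[F]_n) m : mxpow A m.+1 = A *m mxpow A m.
Proof. by []. Qed.

Lemma mxpowD (A : 'M[F]_n) a b : mxpow A (a + b) = mxpow A a *m mxpow A b.
Proof.
elim: a => [|a IH]; first by rewrite add0n mul1mx.
by rewrite addSn !mxpowS IH mulmxA.
Qed.

Lemma mxrank_mxpow (A : 'M[F]_n) m : (0 < m)%N -> (\rank (mxpow A m) <= \rank A)%N.
Proof. by case: m => // m _; rewrite mxpowS mxrankM_maxl. Qed.

Lemma mxpow_conj (P A : 'M[F]_n) m : P \in unitmx ->
  mxpow (invmx P *m A *m P) m = invmx P *m mxpow A m *m P.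
Proof.
move=> uP; elim: m => [|m IH]; first by rewrite /mxpow /= mulmx1 mulVmx.
by rewrite !mxpowS IH !mulmxA mulmxK.
Qed.

End MxPow.

Section IsolatedSubsemigroup.
Variables (F : fieldType) (n : nat) (S : {pred 'M[F]_n}).
Hypotheses (S_mul : subsemigroup S) (S_iso : isolated S).

Lemma isolated_sqr x : x *m x \in S -> x \in S.
Proof. by move=> xxS; apply: (S_iso (m := 2)) => //; rewrite /mxpow /= mulmx1. Qed.

Lemma mxpow_mem x m : x \in S -> (0 < m)%N -> mxpow x m \in S.
Proof.
move=> xS; elim: m => [|[|m] IH] // _; first by rewrite /mxpow /= mulmx1.
exact: S_mul xS (IH _).
Qed.

Lemma pid_mx_succ_mem k : (k.+1 < n)%N -> pid_mx k \in S -> pid_mx k.+1 \in S.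
Proof.
move=> lt_k1n pkS; have lt_kn := ltnW lt_k1n.
pose i := Ordinal lt_kn; pose j := Ordinal lt_k1n.
have pp : (pid_mx k : 'M[F]_n) *m (pid_mx k : 'M[F]_n) = pid_mx k.
  by rewrite pid_mx_id // ltnW.
have ji : (j == i) = false by rewrite -val_eqE /= gtn_eqF.
have jk : (j < k)%N = false by rewrite ltnNge leqnSn.
(* Both [a] and [b] square to [pid_mx k], and [a *m b = pid_mx k.+1]. *)
pose a : 'M[F]_n := pid_mx k + delta_mx i j.
pose b : 'M[F]_n := pid_mx k + delta_mx j i.
have aS : a \in S.
  apply: isolated_sqr; rewrite !mulmxDl !mulmxDr pp mul_pid_delta_mx.
  by rewrite mul_delta_pid_mx /= jk ltnn mul_delta_mx_cond ji mulr0n !addr0.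
have bS : b \in S.
  apply: isolated_sqr; rewrite !mulmxDl !mulmxDr pp mul_pid_delta_mx.
  by rewrite mul_delta_pid_mx /= jk ltnn mul_delta_mx_cond eq_sym ji mulr0n !addr0.
have := S_mul aS bS; rewrite !mulmxDl !mulmxDr pp mul_pid_delta_mx mul_delta_pid_mx /=.
by rewrite jk mul_delta_mx addr0 add0r -[k]/(nat_of_ord i) -pid_mxS.
Qed.

Lemma pid_mx_pred_mem k :
  (k.+1 < n)%N -> pid_mx k.+1 \in S -> pid_mx k.+2 \in S -> pid_mx k \in S.
Proof.
move=> lt_k1n pk1S pk2S; have lt_kn := ltnW lt_k1n.
pose i := Ordinal lt_kn; pose j := Ordinal lt_k1n.
have pp : (pid_mx k : 'M[F]_n) *m (pid_mx k : 'M[F]_n) = pid_mx k.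
  by rewrite pid_mx_id // ltnW.
have ji : (j == i) = false by rewrite -val_eqE /= gtn_eqF.
have jk : (j < k)%N = false by rewrite ltnNge leqnSn.
(* [x] squares to [pid_mx k.+2], and [pid_mx k.+1 *m x *m pid_mx k.+1 = pid_mx k]. *)
pose x : 'M[F]_n := pid_mx k + delta_mx i j + delta_mx j i.
have xS : x \in S.
  apply: isolated_sqr; rewrite !mulmxDl !mulmxDr pp !mul_pid_delta_mx.
  rewrite !mul_delta_pid_mx /= jk ltnn !mul_delta_mx_cond ji eq_sym ji !eqxx.
  rewrite !mulr0n !mulr1n !addr0 !add0r.
  by rewrite -[k]/(nat_of_ord i) -pid_mxS -[i.+1]/(nat_of_ord j) -pid_mxS.
have := S_mul (S_mul pk1S xS) pk1S.
rewrite /x !mulmxDr !mulmxDl !mul_pid_mx !mul_pid_delta_mx /=.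
rewrite ltnSn ltnn mul0mx addr0 mul_delta_pid_mx /= ltnn addr0.
by have -> : minn n (minn (minn n (minn k.+1 k)) k.+1) = k by lia.
Qed.

Lemma pid_mx_mem_of_zero r : 0 \in S -> (r <= n.-1)%N -> pid_mx r \in S.
Proof.
move=> zS; elim: r => [|r IH] le_rn; first by rewrite pid_mx_0.
by apply: pid_mx_succ_mem; [lia | apply: IH; lia].
Qed.

Lemma zero_mem_of_pid_mx r : (r <= n - 2)%N -> pid_mx r \in S -> 0 \in S.
Proof.
elim: r => [|r IH] le_rn prS; first by rewrite pid_mx_0 in prS.
apply: IH; first lia.
by apply: pid_mx_pred_mem => //; [lia | apply: pid_mx_succ_mem => //; lia].
Qed.

End IsolatedSubsemigroup.

Section Conjugation.
Variables (F : fieldType) (n : nat) (S : {pred 'M[F]_n}) (P : 'M[F]_n).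
Hypothesis uP : P \in unitmx.

Definition conj_pred : {pred 'M[F]_n} := [pred A | invmx P *m A *m P \in S].

Lemma subsemigroup_conj : subsemigroup S -> subsemigroup conj_pred.
Proof.
move=> S_mul A B; rewrite !inE => AS BS.
by have := S_mul _ _ AS BS; rewrite !mulmxA mulmxK.
Qed.

Lemma isolated_conj : isolated S -> isolated conj_pred.
Proof. by move=> S_iso x m m_gt0; rewrite !inE -mxpow_conj //; apply: S_iso. Qed.

End Conjugation.

Lemma idem_mx_similar_pid_mx (F : fieldType) n (e : 'M[F]_n) : idem_mx e ->
  exists2 P, P \in unitmx & e = invmx P *m pid_mx (\rank e) *m P.
Proof.
(* With e = L D U from Gaussian elimination, P := D U + (1 - D) L^-1 satisfies
   P e = D P, and P L = 1 + N with N ^+ 2 = 0. *)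
move=> ee; set L := col_ebase e; set U := row_ebase e.
set D : 'M[F]_n := pid_mx (\rank e).
have LDU : L *m D *m U = e by exact: mulmx_ebase.
have uL : L \in unitmx by exact: col_ebase_unit.
have uU : U \in unitmx by exact: row_ebase_unit.
have DD : D *m D = D by rewrite pid_mx_id // rank_leq_col.
have DULD : D *m U *m L *m D = D.
  have : invmx L *m (e *m e) *m invmx U = invmx L *m e *m invmx U by rewrite ee.
  by rewrite -LDU !mulmxA mulVmx // mul1mx -!mulmxA mulmxV // mulmx1 !mulmxA.
pose N := D *m U *m L *m (1%:M - D).
have ND : N *m D = 0 by rewrite /N -mulmxA mulmxBl mul1mx DD subrr mulmx0.
have NN : N *m N = 0 by rewrite {2}/N !mulmxA ND !mul0mx.
have u1N : 1%:M + N \in unitmx.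
  apply: (proj1 (@mulmx1_unit _ _ _ (1%:M - N) _)).
  by rewrite mulmxDl !mulmxBr !mul1mx mulmx1 NN subr0 subrK.
pose P := D *m U + (1%:M - D) *m invmx L.
have PL : P *m L = 1%:M + N.
  rewrite /P mulmxDl -[_ *m invmx L *m L]mulmxA mulVmx // mulmx1.
  by rewrite /N mulmxBr mulmx1 DULD addrCA.
have uP : P \in unitmx by rewrite -(mulmxK uL P) PL unitmx_mul u1N unitmx_inv.
have Pe : P *m e = D *m P.
  rewrite -LDU !mulmxA PL mulmxDl mul1mx ND addr0.
  by rewrite /P mulmxDr mulmxA DD mulmxA mulmxBr mulmx1 DD subrr mul0mx addr0.
by exists P => //; rewrite -mulmxA -Pe mulmxA mulVmx // mul1mx.
Qed.

Section FiniteField.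
Variables (F : finFieldType) (n : nat).

Lemma mxpow_eventually_periodic (A : 'M[F]_n) :
  exists i p, (0 < p)%N /\ forall m, (i <= m)%N -> mxpow A (m + p) = mxpow A m.
Proof.
pose f (i : 'I_#|{: 'M[F]_n}|.+1) := mxpow A i.
have /injectivePn[i [j neq_ij fij]] : ~~ injectiveb f.
  by apply/injectiveP => /leq_card; rewrite card_ord ltnn.
wlog lt_ij : i j neq_ij fij / (i < j)%N.
  move=> base; case: (ltngtP i j) => [|lt_ji|/val_inj eq_ij]; first exact: base.
    by apply: (base j i); rewrite // eq_sym.
  by rewrite eq_ij eqxx in neq_ij.
exists i, (j - i)%N; split=> [|m le_im]; first by rewrite subn_gt0.
have -> : (m + (j - i) = (m - i) + j)%N by lia.
by rewrite mxpowD -[mxpow A j]/(f j) -fij -mxpowD subnK.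
Qed.

Lemma mxpow_idem (A : 'M[F]_n) : exists2 k, (0 < k)%N & idem_mx (mxpow A k).
Proof.
have [i [p [p_gt0 periodic]]] := mxpow_eventually_periodic A.
have periodicM t m : (i <= m)%N -> mxpow A (m + t * p) = mxpow A m.
  move=> le_im; elim: t => [|t IH]; first by rewrite addn0.
  by rewrite mulSn addnA addnAC periodic ?IH // (leq_trans le_im) ?leq_addr.
exists (i.+1 * p)%N; first by rewrite muln_gt0.
by rewrite /idem_mx -mxpowD periodicM // (leq_trans (leqnSn i)) ?leq_pmulr.
Qed.

End FiniteField.

Section Projections.
Variables (F : fieldType) (n : nat).

Lemma mxrank_proj_mx (U V : 'M[F]_n) :
  (U :&: V = 0)%MS -> \rank (proj_mx U V) = \rank U.
Proof.
move=> capUV; apply/eqP; rewrite eqn_leq; apply/andP; split.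
  by rewrite -[proj_mx U V]mul1mx mxrankS ?proj_mx_sub.
by rewrite -{1}(proj_mx_id capUV (submx_refl U)) mxrankM_maxr.
Qed.

Lemma mxrank_mul_proj_mx (V1 V2 W1 W2 : 'M[F]_n) :
  (V1 :&: V2 = 0)%MS -> (V2 <= W1)%MS ->
  (\rank (proj_mx W1 W2 *m proj_mx V1 V2) + \rank V2 <= \rank W1)%N.
Proof.
move=> capV sV2W1; rewrite -(mxrank_mul_ker W1 (proj_mx V1 V2)); apply: leq_add.
  by rewrite mxrankS // submxMr // -[proj_mx W1 W2]mul1mx proj_mx_sub.
apply: mxrankS; rewrite sub_capmx sV2W1 sub_kermx proj_mx_0 ?eqxx //.
Qed.

Lemma mxrank_mul_eproj (V1 V2 W1 W2 : 'M[F]_n) :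
  dirsum_full V1 V2 -> dirsum_full W1 W2 -> (V2 <= W1)%MS ->
  \rank (eproj V1 V2) = n.-1 -> \rank (eproj W1 W2) = n.-1 ->
  (\rank (eproj W1 W2 *m eproj V1 V2) <= n - 2)%N.
Proof.
move=> [/eqmx0P capV sumV] [/eqmx0P capW _] sV2W1.
rewrite /eproj !mxrank_proj_mx // => rV1 rW1.
have := mxrank_sum_cap V1 V2; rewrite capV mxrank0 (eqmxP sumV) mxrank1 rV1.
have := mxrank_mul_proj_mx W2 capV sV2W1; rewrite rW1; lia.
Qed.

End Projections.

Lemma zero_mem_of_idem (F : fieldType) n (S : {pred 'M[F]_n}) (e : 'M[F]_n) :
  subsemigroup S -> isolated S -> e \in S -> idem_mx e -> (\rank e <= n - 2)%N ->
  0 \in S.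
Proof.
move=> S_mul S_iso eS ee le_e; have [P uP eE] := idem_mx_similar_pid_mx ee.
have: pid_mx (\rank e) \in conj_pred S P by rewrite inE -eE.
move/(zero_mem_of_pid_mx (subsemigroup_conj uP S_mul) (isolated_conj uP S_iso) le_e).
by rewrite inE mulmx0 mul0mx.
Qed.

Lemma mem_of_zero_mem (F : finFieldType) n (S : {pred 'M[F]_n}) (A : 'M[F]_n) :
  subsemigroup S -> isolated S -> 0 \in S -> (\rank A <= n.-1)%N -> A \in S.
Proof.
move=> S_mul S_iso zS le_A; have [k k_gt0 idem_Ak] := mxpow_idem A.
apply: (S_iso _ _ k_gt0); have [P uP ->] := idem_mx_similar_pid_mx idem_Ak.
have zS' : 0 \in conj_pred S P by rewrite inE mulmx0 mul0mx.
have le_Ak := leq_trans (mxrank_mxpow A k_gt0) le_A.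
have S'_mul := subsemigroup_conj uP S_mul; have S'_iso := isolated_conj uP S_iso.
by have := pid_mx_mem_of_zero S'_mul S'_iso zS' le_Ak.
Qed.

Lemma idem_mem_of_eproj (F : finFieldType) n (S : {pred 'M[F]_n})
    (V1 V2 W1 W2 : 'M[F]_n) :
  subsemigroup S -> dirsum_full V1 V2 -> dirsum_full W1 W2 -> (V2 <= W1)%MS ->
  eproj V1 V2 \in S -> eproj W1 W2 \in S ->
  \rank (eproj V1 V2) = n.-1 -> \rank (eproj W1 W2) = n.-1 ->
  exists e : 'M[F]_n, [/\ e \in S, idem_mx e & (\rank e <= n - 2)%N].
Proof.
move=> S_mul dV dW sV2W1 eVS eWS rV rW.
have qS := S_mul _ _ eWS eVS.
have [k k_gt0 idem_qk] := mxpow_idem (eproj W1 W2 *m eproj V1 V2).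
exists (mxpow (eproj W1 W2 *m eproj V1 V2) k); split=> //; first exact: mxpow_mem.
exact: leq_trans (mxrank_mxpow _ k_gt0) (mxrank_mul_eproj dV dW sV2W1 rV rW).
Qed.

Unset Implicit Arguments.
Set Strict Implicit.

Theorem lemma27 (F : finFieldType) (n : nat) (hn : (2 <= n)%N)
  (S : {pred 'M[F]_n}) :
  subsemigroup S -> isolated S ->
  ( (0 : 'M[F]_n) \in S
    \/ (exists V1 V2 W1 W2 : 'M[F]_n,
          [/\ dirsum_full V1 V2 /\ dirsum_full W1 W2,
              eproj V1 V2 \in S /\ eproj W1 W2 \in S,
              \rank (eproj V1 V2) = n.-1 /\ \rank (eproj W1 W2) = n.-1
            & (V2 <= W1)%MS])
    \/ (exists e : 'M[F]_n, [/\ e \in S, idem_mx e & (\rank e <= n - 2)%N]) ) ->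
  forall A : 'M[F]_n, (\rank A <= n.-1)%N -> A \in S.
Proof.
move=> S_mul S_iso cases A le_A; apply: mem_of_zero_mem => //.
case: cases => [//|[[V1 [V2 [W1 [W2 [[dV dW] [eVS eWS] [rV rW] sV2W1]]]]]|]].
  have [e [eS ee le_e]] := idem_mem_of_eproj S_mul dV dW sV2W1 eVS eWS rV rW.
  exact: zero_mem_of_idem S_mul S_iso eS ee le_e.
by case=> e [eS ee le_e]; apply: zero_mem_of_idem S_mul S_iso eS ee le_e.
Qed.
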